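(* Consider the single-camp, two-phase problem with bias-dependent camp weights described in the context: maximize $\sum_i v_i^{(2)}$ over nonnegative vectors $\mathbf{x^{(1)}},\mathbf{x^{(2)}}\in\mathbb{R}^n$ with $\sum_i x_i^{(1)}+\sum_i x_i^{(2)}\le k_g$. Let $k_g^{(1)}=\sum_i x_i^{(1)}$ and $k_g^{(2)}=\sum_i x_i^{(2)}$. Then it is optimal to exhaust the entire budget ($k_g^{(1)}+k_g^{(2)}=k_g$), and if not, it is optimal to not invest at all ($k_g^{(1)}=k_g^{(2)}=0$). Furthermore, it is an optimal strategy to invest on at most one node in a given phase (i.e., there is an optimal solution in which each of $\mathbf{x^{(1)}}$ and $\mathbf{x^{(2)}}$ has at most one nonzero entry).
   Context: A social network has node set $N=\{1,\dots,n\}$ and a real $n\times n$ matrix $\mathbf{w}=(w_{ij})$ with $\sum_j|w_{ij}|<1$ for every $i$; write $\Delta=(\mathbf{I}-\mathbf{w})^{-1}$. Each node $i$ has an initial opinion $v_i^0$, a bias weight $w_{ii}^0$, and a total camp weight $\theta_i$. There is a single (good) camp with budget $k_g\ge 0$ choosing investments $\mathbf{x^{(1)}},\mathbf{x^{(2)}}\ge 0$ in phases 1 and 2. Opinions evolve by $\mathbf{v^{(0)}}=\mathbf{v^0}$ and for $p=1,2$: $\mathbf{v^{(p)}}=\Delta(\mathbf{w^0}\circ\mathbf{v^{(p-1)}}+\mathbf{w_g^{(p)}}\circ\mathbf{x^{(p)}})$, where $\circ$ is the entrywise product, $\mathbf{w^0}=(w_{ii}^0)_i$, and the camp's influence weight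 on node $i$ in phase $p$ depends on the node's opinion at the start of that phase: $w_{ig}^{(p)}=\theta_i\frac{1+w_{ii}^0 v_i^{(p-1)}}{2}$. *)

From HB Require Import structures.
From mathcomp Require Import all_boot all_order all_algebra.
From mathcomp Require Import reals.
Set Implicit Arguments. Unset Strict Implicit. Unset Printing Implicit Defensive.
Import Order.TTheory GRing.Theory Num.Theory.
Local Open Scope ring_scope.

Section Defs.
Variables (R : realType) (n : nat).

Definition Delta (w : 'M[R]_n) : 'M[R]_n := invmx (1%:M - w).

Definition hprod (a b : 'cV[R]_n) : 'cV[R]_n := \col_i (a i 0 * b i 0).

Definition camp_weight (w0 theta vprev : 'cV[R]_n) : 'cV[R]_n :=
  \col_i (theta i 0 * ((1 + w0 i 0 * vprev i 0) / 2)).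

Definition phase (w : 'M[R]_n) (w0 theta vprev x : 'cV[R]_n) : 'cV[R]_n :=
  Delta w *m (hprod w0 vprev + hprod (camp_weight w0 theta vprev) x).

Definition v2 (w : 'M[R]_n) (w0 theta v0 x1 x2 : 'cV[R]_n) : 'cV[R]_n :=
  phase w w0 theta (phase w w0 theta v0 x1) x2.

Definition objective (w : 'M[R]_n) (w0 theta v0 x1 x2 : 'cV[R]_n) : R :=
  \sum_i v2 w w0 theta v0 x1 x2 i 0.

Definition budget (x : 'cV[R]_n) : R := \sum_i x i 0.

Definition feasible (kg : R) (x1 x2 : 'cV[R]_n) : Prop :=
  (forall i, 0 <= x1 i 0) /\ (forall i, 0 <= x2 i 0) /\
  budget x1 + budget x2 <= kg.

Definition optimal (w : 'M[R]_n) (w0 theta v0 : 'cV[R]_n) (kg : R)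
    (x1 x2 : 'cV[R]_n) : Prop :=
  feasible kg x1 x2 /\
  forall y1 y2, feasible kg y1 y2 ->
    objective w w0 theta v0 y1 y2 <= objective w w0 theta v0 x1 x2.

Definition at_most_one_node (x : 'cV[R]_n) : Prop :=
  (#|[set i : 'I_n | x i ord0 != 0%R]| <= 1)%N.

End Defs.

(* For a fixed first-phase investment, the final opinions and hence the
   objective are affine in the second-phase investment x2; for a fixed x2 they
   are affine in x1, since the first-phase opinions are affine in x1 and enter
   the second phase affinely.  An affine function on {x >= 0, sum x <= K} is
   maximised at 0 or at a vertex K e_j, so every feasible strategy is dominated
   by investing nothing or by a strategy (t e_i, (kg - t) e_j) exhausting the
   budget on one node per phase.  Along each such segment the objective is a
   polynomial in t, so it attains its maximum on [0, kg]; the best of these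
   finitely many maxima and of the zero strategy is optimal. *)

From HB Require Import structures.
From mathcomp Require Import all_boot all_order all_algebra.
From mathcomp Require Import reals ring lra boolp topology normedtype derive.
Set Implicit Arguments.
Unset Strict Implicit.
Unset Printing Implicit Defensive.
Import Order.TTheory GRing.Theory Num.Theory numFieldNormedType.Exports.
Local Open Scope ring_scope.

Lemma EVT_max_poly (R : realType) (f : R -> R) (q : {poly R}) (a b : R) :
  a <= b -> (forall t, f t = q.[t]) ->
  exists2 c, a <= c <= b & forall t, a <= t <= b -> f t <= f c.
Proof.
move=> ab fq; have fE : f = horner q by apply/funext.
have [c cab cmax] : exists2 c, c \in `[a, b] & forall t, t \in `[a, b] -> f t <= f c.
  by apply: EVT_max; rewrite // fE; exact/continuous_subspaceT/continuous_horner.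
by exists c; [rewrite in_itv in cab | move=> t tab; apply: cmax; rewrite in_itv].
Qed.

Section ConcentratedInvestment.
Variables (R : realType) (n : nat).
Implicit Types (x : 'cV[R]_n) (f : 'cV[R]_n -> R).

Definition affine_fun f :=
  exists (a : R) (g : 'I_n -> R), forall x, f x = a + \sum_k g k * x k 0.

Lemma sum_mul_scale_delta (g : 'I_n -> R) t i :
  \sum_k g k * (t *: delta_mx i 0 : 'cV[R]_n) k 0 = g i * t.
Proof.
rewrite (bigD1 i) //= big1 => [|k /negbTE ki]; last by rewrite !mxE ki mulr0 mulr0.
by rewrite !mxE !eqxx mulr1 addr0.
Qed.

Lemma budget_scale_delta t i : budget (t *: delta_mx i 0 : 'cV[R]_n) = t.
Proof.
rewrite -[RHS]mul1r -(sum_mul_scale_delta (fun=> 1) t i).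
by apply: eq_bigr => k _; rewrite mul1r.
Qed.

Lemma budget0 : budget (0 : 'cV[R]_n) = 0.
Proof. by rewrite /budget big1 // => k _; rewrite mxE. Qed.

Lemma at_most_one_node0 : at_most_one_node (0 : 'cV[R]_n).
Proof.
rewrite /at_most_one_node (_ : [set _ | _] = set0) ?cards0 //.
by apply/setP => k; rewrite !inE mxE eqxx.
Qed.

Lemma at_most_one_node_scale_delta t (i : 'I_n) :
  at_most_one_node (t *: delta_mx i 0 : 'cV[R]_n).
Proof.
rewrite /at_most_one_node -[X in (_ <= X)%N](cards1 i) subset_leq_card //.
apply/subsetP => k; rewrite !inE !mxE; apply: contraTT => ki.
by rewrite negbK (negbTE ki) mulr0.
Qed.

Lemma affine_fun_sum (I : finType) f (c d : I -> R) (h : I -> 'cV[R]_n -> R) :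
  (forall l, affine_fun (h l)) -> (forall x, f x = \sum_l (c l + d l * h l x)) ->
  affine_fun f.
Proof.
move=> /fin_all_exists[a /fin_all_exists[g hE]] fE.
exists (\sum_l (c l + d l * a l)), (fun k => \sum_l d l * g l k) => x.
rewrite fE; under eq_bigr => l _ do rewrite hE mulrDr addrA mulr_sumr.
rewrite big_split /= exchange_big; congr (_ + _); apply: eq_bigr => k _.
by rewrite mulr_suml; apply: eq_bigr => l _; rewrite mulrA.
Qed.

Lemma affine_le_concentrated (i0 : 'I_n) f x :
  affine_fun f -> (forall k, 0 <= x k 0) ->
  exists j, f x <= f (budget x *: delta_mx j 0).
Proof.
move=> [a [g fE]] x_ge0.
have [j _ g_max] := @arg_maxP _ _ 'I_n i0 xpredT g isT.
exists j; rewrite !fE sum_mul_scale_delta lerD2l /budget mulr_sumr.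
by apply: ler_sum => k _; apply: ler_wpM2r => //; exact: g_max.
Qed.

Lemma affine_le_vertex f x K :
  affine_fun f -> (forall k, 0 <= x k 0) -> budget x <= K ->
  f x <= f 0 \/ exists j, f x <= f (K *: delta_mx j 0).
Proof.
move=> f_aff x_ge0 bK; have [a [g fE]] := f_aff.
have f0 : f 0 = a by rewrite fE big1 ?addr0 // => k _; rewrite mxE mulr0.
case: (pickP (fun _ : 'I_n => true)) => [i0 _|no_index]; last first.
  by left; rewrite fE f0 big1 ?addr0 // => k; have := no_index k.
have [j fx_le] := affine_le_concentrated i0 f_aff x_ge0.
rewrite (fE (_ *: _)) sum_mul_scale_delta in fx_le.
have fKj : f (K *: delta_mx j 0) = a + g j * K by rewrite fE sum_mul_scale_delta.
have b_ge0 : 0 <= budget x by apply: sumr_ge0.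
rewrite f0; have [g_ge0|g_lt0] := lerP 0 (g j); [right; exists j; rewrite fKj|left]; nra.
Qed.

End ConcentratedInvestment.

Lemma sum_mulmx_col (R : pzRingType) (m n : nat) (A : 'M[R]_(m, n)) (y : 'cV[R]_n) :
  \sum_i (A *m y) i 0 = \sum_k (\sum_i A i k) * y k 0.
Proof.
under eq_bigr do rewrite mxE.
by rewrite exchange_big; apply: eq_bigr => k _; rewrite mulr_suml.
Qed.

Section Objective.
Variables (R : realType) (n : nat) (w : 'M[R]_n) (w0 theta v0 : 'cV[R]_n).

Local Notation F := (objective w w0 theta v0).
Local Notation phase := (phase w w0 theta).
Local Notation u k := (\sum_i Delta w i k).

Lemma phaseE v x k : phase v x k 0 =
  \sum_l Delta w k l * (w0 l 0 * v l 0) +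
  \sum_l Delta w k l * camp_weight w0 theta v l 0 * x l 0.
Proof.
rewrite /phase mxE -big_split /=.
by apply: eq_bigr => l _; rewrite /hprod !mxE mulrDr !mulrA.
Qed.

Lemma phase_affine v k : affine_fun (fun x => phase v x k 0).
Proof. by eexists; eexists => x; exact: phaseE. Qed.

Lemma objectiveE x1 x2 : F x1 x2 =
  \sum_k u k * (w0 k 0 * phase v0 x1 k 0) +
  \sum_k u k * camp_weight w0 theta (phase v0 x1) k 0 * x2 k 0.
Proof.
rewrite /objective /v2 {1}/phase sum_mulmx_col -big_split /=.
by apply: eq_bigr => k _; rewrite /hprod !mxE mulrDr !mulrA.
Qed.

Lemma objective_affine2 x1 : affine_fun (F x1).
Proof. by eexists; eexists => x2; exact: objectiveE. Qed.

Lemma objective_affine1 x2 : affine_fun (F^~ x2).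
Proof.
apply: (affine_fun_sum (c := fun k => u k * theta k 0 * x2 k 0 / 2)
  (d := fun k => u k * (w0 k 0 + theta k 0 * w0 k 0 * x2 k 0 / 2)) (phase_affine v0)) => x1.
rewrite objectiveE; set V := phase v0 x1.
rewrite -big_split /=; apply: eq_bigr => k _.
by rewrite [camp_weight _ _ _ _ _]mxE; ring.
Qed.

Lemma objective_segment_poly kg i j : exists q : {poly R}, forall t,
  F (t *: delta_mx i 0) ((kg - t) *: delta_mx j 0) = q.[t].
Proof.
pose P k := (\sum_l Delta w k l * (w0 l 0 * v0 l 0))%:P +
  (Delta w k i * camp_weight w0 theta v0 i 0) *: 'X.
have PE t k : phase v0 (t *: delta_mx i 0) k 0 = (P k).[t].
  by rewrite phaseE sum_mul_scale_delta !hornerE.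
exists (\sum_k (u k * w0 k 0) *: P k +
  (u j * theta j 0 / 2) *: ((1 + w0 j 0 *: P j) * (kg%:P - 'X))) => t.
rewrite objectiveE sum_mul_scale_delta hornerD horner_sum; congr (_ + _).
  by apply: eq_bigr => k _; rewrite PE hornerZ mulrA.
by rewrite [camp_weight _ _ _ _ _]mxE PE !hornerE /=; ring.
Qed.

End Objective.

Section Optimum.
Variables (R : realType) (n : nat) (w : 'M[R]_n) (w0 theta v0 : 'cV[R]_n) (kg : R).
Hypothesis kg_ge0 : 0 <= kg.

Local Notation F := (objective w w0 theta v0).

Lemma feasible0 : feasible kg (0 : 'cV[R]_n) 0.
Proof. by split; [|split]; rewrite ?budget0 ?addr0 // => k; rewrite mxE. Qed.

Lemma feasible_segment t (i j : 'I_n) : 0 <= t <= kg ->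
  feasible kg (t *: delta_mx i 0) ((kg - t) *: delta_mx j 0).
Proof.
move=> /andP[t_ge0 t_le].
have delta_ge0 s (l k : 'I_n) : 0 <= s -> 0 <= (s *: delta_mx l 0 : 'cV[R]_n) k 0.
  by move=> s_ge0; rewrite !mxE mulr_ge0 ?ler0n.
split; [|split]; first by move=> k; apply: delta_ge0.
  by move=> k; apply: delta_ge0; rewrite subr_ge0.
by rewrite !budget_scale_delta addrC subrK.
Qed.

Lemma objective_le_segment y1 y2 : feasible kg y1 y2 ->
  F y1 y2 <= F 0 0 \/ exists i j t, 0 <= t <= kg /\
    F y1 y2 <= F (t *: delta_mx i 0) ((kg - t) *: delta_mx j 0).
Proof.
move=> [y1_ge0 [y2_ge0 y_budget]].
have b1_ge0 : 0 <= budget y1 by apply: sumr_ge0.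
have b2_ge0 : 0 <= budget y2 by apply: sumr_ge0.
have b1_le : budget y1 <= kg by lra.
have b2_le : budget y2 <= kg - budget y1 by lra.
have [Fy0|[j Fyj]] :=
  affine_le_vertex (objective_affine2 w w0 theta v0 y1) y2_ge0 b2_le.
  have [F00|[i Fi0]] :=
    affine_le_vertex (objective_affine1 w w0 theta v0 0) y1_ge0 b1_le.
    by left; apply: le_trans F00.
  right; exists i, i, kg; rewrite subrr scale0r lexx kg_ge0.
  by split=> //; apply: le_trans Fi0.
have [i Fij] := affine_le_concentrated j
  (objective_affine1 w w0 theta v0 ((kg - budget y1) *: delta_mx j 0)) y1_ge0.
right; exists i, j, (budget y1); split; last exact: le_trans Fij.
by rewrite b1_ge0 b1_le.
Qed.

Lemma exists_optimal_concentrated : exists x1 x2,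
  optimal w w0 theta v0 kg x1 x2 /\
  (budget x1 + budget x2 = kg \/ (budget x1 = 0 /\ budget x2 = 0)) /\
  at_most_one_node x1 /\ at_most_one_node x2.
Proof.
pose seg (p : 'I_n * 'I_n) t := F (t *: delta_mx p.1 0) ((kg - t) *: delta_mx p.2 0).
have seg_max p : exists t,
    0 <= t <= kg /\ forall s, 0 <= s <= kg -> seg p s <= seg p t.
  have [q qE] := objective_segment_poly w w0 theta v0 kg p.1 p.2.
  by have [t] := EVT_max_poly kg_ge0 qE; exists t.
have [tm tm_max] := fin_all_exists seg_max.
pose cand (c : option ('I_n * 'I_n)) : 'cV[R]_n * 'cV[R]_n := if c is Some p
  then (tm p *: delta_mx p.1 0, (kg - tm p) *: delta_mx p.2 0) else (0, 0).
have [c _ c_max] :=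
  @arg_maxP _ _ _ None xpredT (fun c => F (cand c).1 (cand c).2) isT.
exists (cand c).1, (cand c).2; split; first split.
- case: c {c_max} => [p|] /=; last exact: feasible0.
  by apply: feasible_segment; case: (tm_max p).
- move=> y1 y2 /objective_le_segment[Fy|[i [j [t [t_in Fy]]]]].
    exact: le_trans Fy (c_max None isT).
  apply: (le_trans Fy); apply: le_trans (c_max (Some (i, j)) isT).
  exact: (tm_max (i, j)).2.
- case: c {c_max} => [p|] /=; last first.
    by rewrite budget0; split; [right|split; exact: at_most_one_node0].
  rewrite !budget_scale_delta addrC subrK.
  by split; [left|split; exact: at_most_one_node_scale_delta].
Qed.

End Optimum.

Theorem lemma1 (R : realType) (n : nat) (w : 'M[R]_n)
  (hw : forall i : 'I_n, \sum_(j < n) `|w i j| < 1)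
  (v0 w0 theta : 'cV[R]_n) (kg : R) (hkg : 0 <= kg) :
  (exists x1 x2 : 'cV[R]_n,
     optimal w w0 theta v0 kg x1 x2 /\
     (budget x1 + budget x2 = kg \/ (budget x1 = 0 /\ budget x2 = 0))) /\
  (exists x1 x2 : 'cV[R]_n,
     optimal w w0 theta v0 kg x1 x2 /\
     at_most_one_node x1 /\ at_most_one_node x2).
Proof.
(* [hw] only makes [I - w] invertible; the argument works for any matrix [Delta w]. *)
have [x1 [x2 [x_opt [x_budget x_nodes]]]] :=
  exists_optimal_concentrated w w0 theta v0 hkg.
by split; exists x1, x2.
Qed.
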